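(* For integers $M\ge2$ and $\beta\in(0,1)$ let $C=\frac{1-\beta}{2M-1}$, $\mu_0=(M-1)C^{-1}$, $\sigma_0=\sqrt{\mu_0(C^{-1}-1)}$. Let $\hat Z_0=G+\min(N_1,N_2)$ where $G,N_1,N_2$ are independent, $G$ is geometric on $\{1,2,\dots\}$ with success probability $\beta$, and $N_1,N_2\sim\mathcal{N}(\mu_0,\sigma_0^2)$. Then $$\mathbb{E}[\hat Z_0]=\frac1\beta+\mu_0-\frac{\sigma_0}{\sqrt\pi}.$$ Moreover, if $\beta^*_M\in(0,1)$ denotes a minimizer of $\beta\mapsto\mathbb{E}[\hat Z_0]$ over $(0,1)$, then $M\beta^*_M\to\frac{\sqrt2}{2}$ as $M\to\infty$, i.e. $\beta^*_M\sim\frac{\sqrt2}{2M}$.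
   Context: This is the Gaussian approximation of the age of information at the node diametrically opposite the source in a ring of $2M$ nodes under the uniform Bernoulli policy: the source transmits its own information with probability $\beta$ and every other piece of information is transmitted with probability $C=(1-\beta)/(2M-1)$. *)

From Stdlib Require Import Reals.
Open Scope R_scope.

(* Parameters of the uniform Bernoulli policy on a ring of 2M nodes. *)
Definition Cpar (M : nat) (beta : R) : R := (1 - beta) / (2 * INR M - 1).
Definition mu0 (M : nat) (beta : R) : R := (INR M - 1) / Cpar M beta.
Definition sigma0 (M : nat) (beta : R) : R :=
  sqrt (mu0 M beta * (/ Cpar M beta - 1)).

Definition gauss_pdf (mu sigma x : R) : R :=
  exp (- (x - mu) ^ 2 / (2 * sigma ^ 2)) / (sigma * sqrt (2 * PI)).

(* P(G = k+1) for G geometric on {1,2,...} with success probability beta. *)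
Definition geom_pmf (beta : R) (k : nat) : R := beta * (1 - beta) ^ k.

Definition ImpInt (f : R -> R) (l : R) : Prop :=
  exists pr : forall a b, Riemann_integrable f a b,
    forall eps, eps > 0 -> exists A, forall a b,
      a <= - A -> A <= b -> Rabs (RiemannInt (pr a b) - l) < eps.

Definition DoubleImpInt (F : R -> R -> R) (v : R) : Prop :=
  exists g : R -> R, (forall x, ImpInt (F x) (g x)) /\ ImpInt g v.

(* E[ G + min(N1,N2) ] = L, where G ~ Geom(beta) on {1,2,...},
   N1, N2 ~ N(mu0, sigma0^2), all independent.  The expectation over the
   product space is written as a sum over G of (iterated) integrals
   against the product density. *)
Definition ExpZ0 (M : nat) (beta : R) (L : R) : Prop :=
  exists h : nat -> R,
    (forall k : nat,
       DoubleImpInt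
         (fun x y => (INR (S k) + Rmin x y)
                     * gauss_pdf (mu0 M beta) (sigma0 M beta) x
                     * gauss_pdf (mu0 M beta) (sigma0 M beta) y)
         (h k))
    /\ infinite_sum (fun k => geom_pmf beta k * h k) L.

From Stdlib Require Import Reals Lra Lia Psatz.
From Coquelicot Require Import Coquelicot.
Open Scope R_scope.

(* For N1, N2 ~ N(mu, s^2) independent and a constant K, the iterated
   integral of (K + min x y) pdf(x) pdf(y) is evaluated in closed form: the inner
   integral over y (split at y = x) has antiderivatives built from the density [pdf]
   and the distribution function [Phi]; the outer integral has an antiderivative
   built from [pdf], [Phi] and [Psi], an antiderivative of pdf^2.  The boundary
   values at +-oo come from the Gaussian integral int_0^oo exp(-t^2) = sqrt(PI)/2,
   proved by the classical "differentiate under the integral sign" trick.  This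
   gives K + mu - s / sqrt PI, and summing over the geometric law of G (a Cauchy
   product of geometric series) adds E[G] = 1/beta.

   Comparing a minimizer beta* with the test point (sqrt 2 / 2) / m and dividing by
   m shows that t = m beta* satisfies 1/t + a_m t <= r_m with a_m -> 2 and
   r_m -> 2 sqrt 2; since 1/t + 2 t has the double minimum 2 sqrt 2 at
   t = sqrt 2 / 2, a squeeze between the roots of a_m t^2 - r_m t + 1 concludes. *)

Lemma is_derive_zero_const (f : R -> R) :
  (forall x, is_derive f x 0) -> forall x, f x = f 0.
Proof.
  intros Hf x.
  assert (Hint : is_RInt (fun _ => 0) 0 x (minus (f x) (f 0))).
  { apply (is_RInt_derive (V := R_CompleteNormedModule)); [intros; apply Hf |].
    intros; apply continuous_const. }
  apply (is_RInt_unique (V := R_CompleteNormedModule)) in Hint.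
  rewrite RInt_const in Hint.
  unfold minus, plus, opp, scal in Hint; simpl in Hint; unfold mult in Hint; simpl in Hint.
  lra.
Qed.

Lemma exp_le_compat x y : x <= y -> exp x <= exp y.
Proof.
  intros H; destruct (Rle_lt_or_eq_dec _ _ H) as [Hlt | ->];
    [apply Rlt_le, exp_increasing, Hlt | apply Rle_refl].
Qed.

Lemma reflect_m_infty : Rbar_plus (Rbar_mult (-1) m_infty) 0 = p_infty.
Proof. simpl; destruct (Rle_dec 0 (-1)); [exfalso; lra | reflexivity]. Qed.

Lemma is_lim_affine (f : R -> R) (x : Rbar) (l : R) a c :
  0 < c -> (x = p_infty \/ x = m_infty) ->
  is_lim f x l -> is_lim (fun y => f ((y - a) / c)) x l.
Proof.
  intros Hc Hx Hf.
  apply (is_lim_ext (fun y => f (/ c * y + - a / c))); [intros; f_equal; field; lra |].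
  apply is_lim_comp_lin; [| apply Rgt_not_eq, Rlt_gt, Rinv_0_lt_compat, Hc].
  assert (Hic : 0 < / c) by (apply Rinv_0_lt_compat, Hc).
  destruct Hx as [-> | ->]; simpl;
    (destruct (Rle_dec 0 (/ c)) as [H | H]; [| exfalso; lra]);
    (destruct (Rle_lt_or_eq_dec 0 (/ c) H); [exact Hf | exfalso; lra]).
Qed.

Lemma is_lim_scal (f : R -> R) (x : Rbar) (a l : R) :
  is_lim f x l -> is_lim (fun y => a * f y) x (a * l).
Proof. apply is_lim_scal_l. Qed.

Lemma is_lim_mult_fin (f g : R -> R) (x : Rbar) (lf lg : R) :
  is_lim f x lf -> is_lim g x lg -> is_lim (fun y => f y * g y) x (lf * lg).
Proof. intros Hf Hg; apply (is_lim_mult f g x lf lg Hf Hg); easy. Qed.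

(* [min a y = (a + y - |a - y|) / 2] is continuous in [y]. *)
Lemma continuous_Rmin_r (a y : R) : continuous (Rmin a) y.
Proof.
  apply (continuous_ext (fun z => (a + z - Rabs (a - z)) * / 2)).
  { intros z; cbv beta; unfold Rmin; destruct (Rle_dec a z).
    - rewrite Rabs_left1 by lra; lra.
    - rewrite Rabs_right by lra; lra. }
  apply (continuous_mult (K := R_AbsRing)); [| apply continuous_const].
  apply (continuous_minus (V := R_NormedModule)).
  - apply (continuous_plus (V := R_NormedModule)); [apply continuous_const | apply continuous_id].
  - apply continuous_Rabs_comp, (continuous_minus (V := R_NormedModule));
      [apply continuous_const | apply continuous_id].
Qed.

Lemma RInt_antiderivative (f G : R -> R) a b :
  (forall x, continuous f x) ->
  (forall x, Rmin a b <= x <= Rmax a b -> is_derive G x (f x)) ->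
  RInt f a b = G b - G a.
Proof.
  intros Hf HG; apply (is_RInt_unique (V := R_CompleteNormedModule)).
  apply (is_RInt_derive (V := R_CompleteNormedModule)); [exact HG | intros; apply Hf].
Qed.

Lemma ImpInt_piecewise_antiderivative (f G1 G2 : R -> R) (x0 L1 L2 : R) :
  (forall x, continuous f x) ->
  (forall x, x <= x0 -> is_derive G1 x (f x)) ->
  (forall x, x0 <= x -> is_derive G2 x (f x)) ->
  is_lim G1 m_infty L1 -> is_lim G2 p_infty L2 ->
  ImpInt f ((L2 - G2 x0) + (G1 x0 - L1)).
Proof.
  intros Hf HG1 HG2 HL1 HL2.
  apply is_lim_spec in HL1, HL2.
  assert (Hex : forall a b, ex_RInt f a b).
  { intros; apply (ex_RInt_continuous (V := R_CompleteNormedModule)); intros; apply Hf. }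
  exists (fun a b => ex_RInt_Reals_0 f a b (Hex a b)).
  intros eps Heps.
  destruct (HL1 (mkposreal (eps / 2) ltac:(lra))) as [A1 HA1]; simpl in HA1.
  destruct (HL2 (mkposreal (eps / 2) ltac:(lra))) as [A2 HA2]; simpl in HA2.
  exists (Rmax (Rabs A1 + 1) (Rmax (Rabs A2 + 1) (Rabs x0))); intros a b Ha Hb.
  assert (Hm1 := Rmax_l (Rabs A1 + 1) (Rmax (Rabs A2 + 1) (Rabs x0))).
  assert (Hm2 := Rmax_r (Rabs A1 + 1) (Rmax (Rabs A2 + 1) (Rabs x0))).
  assert (Hm3 := Rmax_l (Rabs A2 + 1) (Rabs x0)).
  assert (Hm4 := Rmax_r (Rabs A2 + 1) (Rabs x0)).
  assert (R1 := Rle_abs (- A1)); assert (R2 := Rle_abs A2).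
  assert (R3 := Rle_abs x0); assert (R4 := Rle_abs (- x0)).
  rewrite Rabs_Ropp in R1, R4.
  rewrite <- RInt_Reals, <- (RInt_Chasles f a x0 b) by apply Hex.
  rewrite (RInt_antiderivative f G1), (RInt_antiderivative f G2); try assumption.
  - unfold plus; simpl.
    assert (h1 := HA1 a ltac:(lra)); assert (h2 := HA2 b ltac:(lra)).
    replace (G1 x0 - G1 a + (G2 b - G2 x0) - (L2 - G2 x0 + (G1 x0 - L1)))
      with ((G2 b - L2) - (G1 a - L1)) by ring.
    apply (Rle_lt_trans _ _ _ (Rabs_triang _ _)); rewrite Rabs_Ropp; lra.
  - intros x Hx; apply HG2; rewrite Rmin_left in Hx; lra.
  - intros x Hx; apply HG1; rewrite Rmax_right in Hx; lra.
Qed.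

Lemma ImpInt_antiderivative (f G : R -> R) (L1 L2 : R) :
  (forall x, continuous f x) -> (forall x, is_derive G x (f x)) ->
  is_lim G m_infty L1 -> is_lim G p_infty L2 -> ImpInt f (L2 - L1).
Proof.
  intros Hf HG HL1 HL2.
  replace (L2 - L1) with ((L2 - G 0) + (G 0 - L1)) by ring.
  apply ImpInt_piecewise_antiderivative; auto.
Qed.

Lemma is_lim_seq_sqrt (u : nat -> R) (l : R) :
  is_lim_seq u l -> 0 <= l -> is_lim_seq (fun n => sqrt (u n)) (sqrt l).
Proof. intros Hu Hl; apply is_lim_seq_continuous; [apply continuity_pt_sqrt |]; assumption. Qed.

Lemma is_lim_seq_inv_INR : is_lim_seq (fun n => / INR n) 0.
Proof. exact (is_lim_seq_inv INR p_infty is_lim_seq_INR ltac:(discriminate)). Qed.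

Lemma sqrt_div_sq x d : 0 < d -> sqrt x / d = sqrt (x / (d * d)).
Proof. intros Hd; rewrite sqrt_div_alt, sqrt_square by nra; lra. Qed.

(* Concavity of the square root: [sqrt x - sqrt y <= (x - y) / sqrt x]. *)
Lemma sqrt_sub_le x y : 0 <= y <= x -> 0 < x -> sqrt x - sqrt y <= (x - y) / sqrt x.
Proof.
  intros Hy Hx; assert (Hs : 0 < sqrt x) by (apply sqrt_lt_R0; lra).
  assert (Ex := sqrt_sqrt x ltac:(lra)); assert (Ey := sqrt_sqrt y ltac:(lra)).
  assert (Hyx : sqrt y <= sqrt x) by (apply sqrt_le_1_alt; lra).
  assert (0 <= sqrt y) by apply sqrt_pos.
  apply (Rmult_le_reg_r (sqrt x)); [lra |].
  replace ((x - y) / sqrt x * sqrt x) with (x - y) by (field; lra); nra.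
Qed.

Lemma quadratic_window a r t : 0 < a -> 0 < t -> / t + a * t <= r ->
  Rabs (t - r / (2 * a)) <= sqrt (r * r - 4 * a) / (2 * a).
Proof.
  intros Ha Ht Hle.
  assert (Hq : 1 + a * t * t <= r * t).
  { apply (Rmult_le_compat_r t) in Hle; [| lra].
    replace ((/ t + a * t) * t) with (1 + a * t * t) in Hle by (field; lra); exact Hle. }
  assert (Hsq : Rabs (2 * a * t - r) <= sqrt (r * r - 4 * a)).
  { rewrite <- sqrt_Rsqr_abs; apply sqrt_le_1_alt; unfold Rsqr; nra. }
  replace (t - r / (2 * a)) with ((2 * a * t - r) / (2 * a)) by (field; lra).
  rewrite Rabs_div, (Rabs_right (2 * a)) by lra.
  unfold Rdiv; apply Rmult_le_compat_r; [left; apply Rinv_0_lt_compat |]; lra.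
Qed.

(* Squeeze: eventually [1/t_n + a_n t_n <= r_n] with [a_n -> la > 0], [r_n -> lr] and
   [lr^2 = 4 la] (a double root in the limit) forces [t_n -> lr / (2 la)]. *)
Lemma squeeze_double_root (t a r : nat -> R) (la lr : R) :
  eventually (fun n => 0 < t n /\ 0 < a n /\ / t n + a n * t n <= r n) ->
  is_lim_seq a la -> is_lim_seq r lr -> 0 < la -> lr * lr - 4 * la = 0 ->
  is_lim_seq t (lr / (2 * la)).
Proof.
  intros Hev Ha Hr Hla Hdisc.
  assert (H2a : is_lim_seq (fun n => 2 * a n) (2 * la))
    by (apply is_lim_seq_mult'; [apply is_lim_seq_const | exact Ha]).
  assert (Hwidth : is_lim_seq (fun n => sqrt (r n * r n - 4 * a n) / (2 * a n)) 0).
  { replace 0 with (sqrt (lr * lr - 4 * la) / (2 * la)) by (rewrite Hdisc, sqrt_0; field; lra).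
    apply is_lim_seq_div'; [| exact H2a | lra].
    apply is_lim_seq_sqrt; [| lra].
    apply is_lim_seq_minus'; [apply is_lim_seq_mult'; exact Hr |].
    apply is_lim_seq_mult'; [apply is_lim_seq_const | exact Ha]. }
  assert (Hcenter : is_lim_seq (fun n => r n / (2 * a n)) (lr / (2 * la)))
    by (apply is_lim_seq_div'; [exact Hr | exact H2a | lra]).
  apply (is_lim_seq_le_le_loc
           (fun n => r n / (2 * a n) - sqrt (r n * r n - 4 * a n) / (2 * a n)) t
           (fun n => r n / (2 * a n) + sqrt (r n * r n - 4 * a n) / (2 * a n))).
  - destruct Hev as [N HN]; exists N; intros n Hn.
    destruct (HN n Hn) as (Ht & Han & Hle).
    apply Rabs_le_between'; exact (quadratic_window _ _ _ Han Ht Hle).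
  - rewrite <- (Rminus_0_r (lr / (2 * la))); apply is_lim_seq_minus'; assumption.
  - rewrite <- (Rplus_0_r (lr / (2 * la))); apply is_lim_seq_plus'; assumption.
Qed.

(** The Gaussian integral. *)

Definition gauss (t : R) : R := exp (- t ^ 2).
Definition gauss_int (x : R) : R := RInt gauss 0 x.

Lemma gauss_continuous x : continuous gauss x.
Proof. apply (ex_derive_continuous (V := R_NormedModule)); unfold gauss; auto_derive; easy. Qed.

Lemma ex_RInt_gauss a b : ex_RInt gauss a b.
Proof. apply (ex_RInt_continuous (V := R_CompleteNormedModule)); intros; apply gauss_continuous. Qed.

Lemma gauss_even x : gauss (- x) = gauss x.
Proof. unfold gauss; f_equal; ring. Qed.

Lemma is_derive_gauss_int x : is_derive gauss_int x (gauss x).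
Proof.
  apply (is_derive_RInt gauss gauss_int 0 x); [| apply gauss_continuous].
  apply filter_forall; intros y.
  apply (RInt_correct (V := R_CompleteNormedModule)), ex_RInt_gauss.
Qed.

Lemma gauss_int_odd x : gauss_int (- x) = - gauss_int x.
Proof.
  assert (Hsum : forall y, is_derive (fun z => gauss_int (- z) + gauss_int z) y 0).
  { intros y; auto_derive.
    - split; [exists (gauss (- y)); apply is_derive_gauss_int |].
      split; [exists (gauss y); apply is_derive_gauss_int | easy].
    - rewrite !(is_derive_unique _ _ _ (is_derive_gauss_int _)), gauss_even; ring. }
  assert (H := is_derive_zero_const _ Hsum x); simpl in H.
  rewrite Ropp_0 in H; unfold gauss_int in *; rewrite RInt_point in H.
  unfold zero in H; simpl in H; lra.
Qed.

Lemma sqrt_PI_pos : 0 < sqrt PI.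
Proof. apply sqrt_lt_R0, PI_RGT_0. Qed.

(* The classical trick: [gauss_int x ^ 2 + gauss_tail x] has zero derivative,
   where [gauss_tail x = int_0^1 exp (-x^2 (1+t^2)) / (1+t^2) dt]; at [x = 0]
   it equals [atan 1 = PI/4]. *)
Definition tail_integrand (x t : R) : R := exp (- x ^ 2 * (1 + t ^ 2)) / (1 + t ^ 2).
Definition gauss_tail (x : R) : R := RInt (tail_integrand x) 0 1.

Lemma one_plus_sq_pos t : 0 < 1 + t ^ 2.
Proof. nra. Qed.

Lemma tail_integrand_dx x t :
  is_derive (fun z => tail_integrand z t) x (- 2 * x * exp (- x ^ 2 * (1 + t ^ 2))).
Proof.
  assert (Ht := one_plus_sq_pos t).
  unfold tail_integrand; auto_derive; [lra |].
  replace (- (x * (x * 1)) * (1 + t * (t * 1))) with (- x ^ 2 * (1 + t ^ 2)) by ring.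
  field; lra.
Qed.

Lemma tail_integrand_continuous x t : continuous (tail_integrand x) t.
Proof.
  assert (Ht := one_plus_sq_pos t).
  apply (ex_derive_continuous (V := R_NormedModule)); unfold tail_integrand.
  auto_derive; lra.
Qed.

Lemma ex_RInt_tail_integrand x : ex_RInt (tail_integrand x) 0 1.
Proof.
  apply (ex_RInt_continuous (V := R_CompleteNormedModule)).
  intros; apply tail_integrand_continuous.
Qed.

(* Joint continuity of the x-derivative, needed to differentiate under the integral. *)
Lemma tail_integrand_dx_continuous x t :
  continuity_2d_pt (fun u v => - 2 * u * exp (- u ^ 2 * (1 + v ^ 2))) x t.
Proof.
  apply continuity_2d_pt_mult.
  - apply continuity_2d_pt_mult; [apply continuity_2d_pt_const | apply continuity_2d_pt_id1].
  - apply continuity_2d_pt_filterlim.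
    eapply filterlim_comp with
      (f := fun z : R * R => - (fst z) ^ 2 * (1 + (snd z) ^ 2)) (g := exp).
    + apply (continuity_2d_pt_filterlim (fun u v => - u ^ 2 * (1 + v ^ 2))).
      repeat first
        [ apply continuity_2d_pt_mult | apply continuity_2d_pt_plus
        | apply continuity_2d_pt_opp | apply continuity_2d_pt_id1
        | apply continuity_2d_pt_id2 | apply continuity_2d_pt_const ].
    + apply (ex_derive_continuous (V := R_NormedModule)); auto_derive; easy.
Qed.

Lemma is_derive_gauss_tail x : is_derive gauss_tail x (- 2 * gauss x * gauss_int x).
Proof.
  replace (- 2 * gauss x * gauss_int x)
    with (RInt (fun t => Derive (fun u => tail_integrand u t) x) 0 1).
  { apply is_derive_RInt_param.
    - apply filter_forall; intros y t _; eexists; apply tail_integrand_dx.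
    - intros t _; eapply continuity_2d_pt_ext; [| apply (tail_integrand_dx_continuous x t)].
      intros u v; symmetry; apply is_derive_unique, tail_integrand_dx.
    - apply filter_forall; intros; apply ex_RInt_tail_integrand. }
  (* substituting [u = x t] turns the integral into [gauss x * gauss_int x] *)
  rewrite (RInt_ext _ (fun t => scal (- 2 * gauss x) (scal x (gauss (x * t + 0))))).
  - rewrite (@RInt_scal R_CompleteNormedModule), (@RInt_comp_lin R_CompleteNormedModule).
    + unfold gauss_int, scal; simpl; unfold mult; simpl.
      now rewrite Rmult_0_r, !Rplus_0_r, Rmult_1_r.
    + apply ex_RInt_gauss.
    + apply (ex_RInt_continuous (V := R_CompleteNormedModule)); intros.
      apply (ex_derive_continuous (V := R_NormedModule)).
      unfold gauss, scal; simpl; unfold mult; simpl; auto_derive; easy.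
  - intros t _.
    replace (Derive (fun u => tail_integrand u t) x) with (- 2 * x * exp (- x ^ 2 * (1 + t ^ 2)))
      by (symmetry; apply is_derive_unique, tail_integrand_dx).
    replace (exp (- x ^ 2 * (1 + t ^ 2))) with (gauss x * gauss (x * t + 0))
      by (unfold gauss; rewrite <- exp_plus; f_equal; ring).
    unfold scal; simpl; unfold mult; simpl; ring.
Qed.

Lemma gauss_tail_0 : gauss_tail 0 = PI / 4.
Proof.
  unfold gauss_tail.
  rewrite (is_RInt_unique (V := R_CompleteNormedModule) _ _ _ (minus (atan 1) (atan 0))).
  - rewrite atan_1, atan_0; unfold minus, plus, opp; simpl; ring.
  - apply (is_RInt_derive (V := R_CompleteNormedModule)).
    + intros t _; unfold tail_integrand.
      replace (exp (- 0 ^ 2 * (1 + t ^ 2)) / (1 + t ^ 2)) with (/ (1 + t ^ 2)).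
      * apply is_derive_Reals, derivable_pt_lim_atan.
      * replace (- 0 ^ 2 * (1 + t ^ 2)) with 0 by ring; rewrite exp_0.
        assert (Ht := one_plus_sq_pos t); field; lra.
    + intros; apply tail_integrand_continuous.
Qed.

Lemma gauss_int_sq_plus_tail x : gauss_int x ^ 2 + gauss_tail x = PI / 4.
Proof.
  rewrite <- gauss_tail_0.
  replace (gauss_tail 0) with (gauss_int 0 ^ 2 + gauss_tail 0)
    by (unfold gauss_int; rewrite RInt_point; unfold zero; simpl; ring).
  apply (is_derive_zero_const (fun y => gauss_int y ^ 2 + gauss_tail y)); intros y.
  replace 0 with (INR 2 * gauss y * gauss_int y ^ Nat.pred 2 + - 2 * gauss y * gauss_int y)
    by (simpl; ring).
  apply (is_derive_plus (K := R_AbsRing) (V := R_NormedModule)).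
  - apply (is_derive_pow gauss_int 2 y (gauss y)), is_derive_gauss_int.
  - apply is_derive_gauss_tail.
Qed.

Lemma gauss_pos x : 0 < gauss x.
Proof. apply exp_pos. Qed.

Lemma gauss_tail_bounds x : 0 <= gauss_tail x <= gauss x.
Proof.
  assert (Hle : forall t, 0 <= t <= 1 -> 0 <= tail_integrand x t <= gauss x).
  { intros t _; unfold tail_integrand, gauss.
    assert (Ht := one_plus_sq_pos t).
    assert (He : exp (- x ^ 2 * (1 + t ^ 2)) <= exp (- x ^ 2)).
    { apply exp_le_compat; nra. }
    assert (Hi : / (1 + t ^ 2) <= 1)
      by (rewrite <- Rinv_1; apply Rinv_le_contravar; nra).
    assert (Hp : 0 < exp (- x ^ 2 * (1 + t ^ 2))) by apply exp_pos.
    unfold Rdiv; split; [apply Rmult_le_pos; [lra | left; apply Rinv_0_lt_compat; lra] | nra]. }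
  unfold gauss_tail; split.
  - apply RInt_ge_0; [lra | apply ex_RInt_tail_integrand | intros t Ht; apply Hle; lra].
  - replace (gauss x) with (RInt (fun _ => gauss x) 0 1)
      by (rewrite RInt_const; unfold scal; simpl; unfold mult; simpl; ring).
    apply RInt_le; [lra | apply ex_RInt_tail_integrand | apply ex_RInt_const |].
    intros t Ht; apply Hle; lra.
Qed.

Lemma is_lim_gauss_p : is_lim gauss p_infty 0.
Proof.
  apply (is_lim_comp (fun y => exp y) (fun x => - x ^ 2) p_infty 0 m_infty).
  - apply is_lim_exp_m.
  - apply (is_lim_ext (fun x => - (x * x))); [intros; ring |].
    apply (is_lim_opp (fun x => x * x) p_infty p_infty).
    apply (is_lim_mult (fun x => x) (fun x => x) p_infty p_infty p_infty);
      [apply is_lim_id | apply is_lim_id | easy].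
  - apply filter_forall; easy.
Qed.

Lemma is_lim_gauss_m : is_lim gauss m_infty 0.
Proof.
  apply (is_lim_ext (fun x => gauss (-1 * x + 0))); [intros; rewrite <- gauss_even; f_equal; ring |].
  apply is_lim_comp_lin; [| lra].
  rewrite reflect_m_infty.
  apply is_lim_gauss_p.
Qed.

Lemma gauss_int_nonneg x : 0 <= x -> 0 <= gauss_int x.
Proof.
  intros Hx; unfold gauss_int.
  apply RInt_ge_0; [lra | apply ex_RInt_gauss | intros; left; apply gauss_pos].
Qed.

(* From [gauss_int x ^ 2 = PI/4 - gauss_tail x] and [gauss_tail x <= gauss x -> 0]. *)
Lemma is_lim_gauss_int_p : is_lim gauss_int p_infty (sqrt PI / 2).
Proof.
  assert (Htail : is_lim gauss_tail p_infty 0).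
  { apply (is_lim_le_le_loc (fun _ => 0) gauss); [| apply is_lim_const | apply is_lim_gauss_p].
    apply filter_forall; apply gauss_tail_bounds. }
  assert (Hpi := PI_RGT_0).
  replace (sqrt PI / 2) with (sqrt (PI / 4 - 0)).
  2: { rewrite Rminus_0_r; replace (PI / 4) with (PI / (2 * 2)) by field.
       rewrite sqrt_div_alt, sqrt_square; lra. }
  apply (is_lim_ext_loc (fun x => sqrt (PI / 4 - gauss_tail x))).
  - exists 0; intros x Hx.
    rewrite <- (gauss_int_sq_plus_tail x).
    replace (gauss_int x ^ 2 + gauss_tail x - gauss_tail x) with (gauss_int x * gauss_int x)
      by ring.
    apply sqrt_square, gauss_int_nonneg; lra.
  - apply (is_lim_comp_continuous (fun x => PI / 4 - gauss_tail x) sqrt).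
    + apply (is_lim_minus' (fun _ => PI / 4)); [apply is_lim_const | apply Htail].
    + apply (ex_derive_continuous (V := R_NormedModule)); eexists.
      apply (is_derive_sqrt (fun x => x)); [apply (is_derive_id (K := R_AbsRing)) | lra].
Qed.

Lemma is_lim_gauss_int_m : is_lim gauss_int m_infty (- (sqrt PI / 2)).
Proof.
  apply (is_lim_ext (fun x => - gauss_int (-1 * x + 0)));
    [intros; rewrite <- gauss_int_odd; f_equal; ring |].
  apply (is_lim_opp _ _ (sqrt PI / 2)), is_lim_comp_lin; [| lra].
  rewrite reflect_m_infty.
  apply is_lim_gauss_int_p.
Qed.

(** The normal distribution N(mu, s^2): density, distribution function [Phi],
    and an antiderivative [Psi] of the squared density. *)

Section Normal.
Variables (mu s : R).
Hypothesis s_pos : 0 < s.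

Let c := s * sqrt 2.

Lemma c_pos : 0 < c.
Proof. apply Rmult_lt_0_compat; [exact s_pos | apply sqrt_lt_R0; lra]. Qed.

Definition pdf (x : R) : R := gauss_pdf mu s x.
Definition Phi (x : R) : R := / 2 + gauss_int ((x - mu) / (s * sqrt 2)) / sqrt PI.
Definition Psi (x : R) : R := gauss_int ((x - mu) / s) / (2 * s * PI).

Lemma pdf_gauss x : pdf x = gauss ((x - mu) / c) / (c * sqrt PI).
Proof.
  unfold pdf, gauss_pdf, gauss, c.
  assert (Hs2 : 0 < sqrt 2) by (apply sqrt_lt_R0; lra).
  rewrite sqrt_mult by (generalize PI_RGT_0; lra).
  replace (((x - mu) / (s * sqrt 2)) ^ 2) with ((x - mu) ^ 2 / (s ^ 2 * sqrt 2 ^ 2))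
    by (field; lra).
  rewrite pow2_sqrt by lra.
  f_equal; [f_equal; field; lra | ring].
Qed.

Lemma is_derive_pdf x : is_derive pdf x (- (x - mu) / s ^ 2 * pdf x).
Proof.
  assert (0 < sqrt (2 * PI)) by (apply sqrt_lt_R0; generalize PI_RGT_0; lra).
  unfold pdf, gauss_pdf; auto_derive; [easy |].
  replace (- (x - mu) ^ 2 / (2 * s ^ 2))
    with (- ((x + - mu) * ((x + - mu) * 1)) * / (2 * (s * (s * 1)))) by (field; lra).
  field; lra.
Qed.

Lemma is_derive_Phi x : is_derive Phi x (pdf x).
Proof.
  assert (Hc := c_pos); assert (Hp := sqrt_PI_pos).
  unfold Phi; auto_derive; [eexists; apply is_derive_gauss_int |].
  rewrite (is_derive_unique _ _ _ (is_derive_gauss_int _)), pdf_gauss.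
  fold c; unfold Rdiv, Rminus; field; lra.
Qed.

Lemma is_derive_Psi x : is_derive Psi x (pdf x ^ 2).
Proof.
  assert (Hc := c_pos); assert (Hp := sqrt_PI_pos); assert (HPI := PI_RGT_0).
  assert (Ec : c ^ 2 = 2 * s ^ 2)
    by (unfold c; rewrite Rpow_mult_distr, pow2_sqrt; lra).
  assert (Ep : sqrt PI ^ 2 = PI) by (apply pow2_sqrt; lra).
  unfold Psi; auto_derive; [eexists; apply is_derive_gauss_int |].
  rewrite (is_derive_unique _ _ _ (is_derive_gauss_int _)), pdf_gauss.
  replace ((gauss ((x - mu) / c) / (c * sqrt PI)) ^ 2)
    with (gauss ((x - mu) / c) ^ 2 / (c ^ 2 * sqrt PI ^ 2)) by (field; lra).
  replace (gauss ((x - mu) / c) ^ 2) with (gauss ((x + - mu) * / s)).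
  - rewrite Ec, Ep; field; lra.
  - assert (Eu : ((x - mu) / c) ^ 2 = (x - mu) ^ 2 / (2 * s ^ 2))
      by (rewrite <- Ec; field; lra).
    unfold gauss.
    replace (exp (- ((x - mu) / c) ^ 2) ^ 2)
      with (exp (- ((x - mu) / c) ^ 2) * exp (- ((x - mu) / c) ^ 2)) by ring.
    rewrite <- exp_plus, Eu; f_equal; field; lra.
Qed.

Lemma continuous_pdf x : continuous pdf x.
Proof. apply (ex_derive_continuous (V := R_NormedModule)); eexists; apply is_derive_pdf. Qed.

Lemma is_lim_pdf (x : Rbar) : x = p_infty \/ x = m_infty -> is_lim pdf x 0.
Proof.
  intros Hx.
  apply (is_lim_ext (fun y => / (c * sqrt PI) * gauss ((y - mu) / c)));
    [intros; rewrite pdf_gauss; field; split; [apply Rgt_not_eq, sqrt_PI_pos | apply Rgt_not_eq, c_pos] |].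
  rewrite <- (Rmult_0_r (/ (c * sqrt PI))); apply is_lim_scal, is_lim_affine;
    [apply c_pos | exact Hx |].
  destruct Hx as [-> | ->]; [apply is_lim_gauss_p | apply is_lim_gauss_m].
Qed.

Lemma is_lim_Phi_p : is_lim Phi p_infty 1.
Proof.
  replace 1 with (/ 2 + / sqrt PI * (sqrt PI / 2)) by (assert (Hp := sqrt_PI_pos); field; lra).
  apply (is_lim_ext (fun y => / 2 + / sqrt PI * gauss_int ((y - mu) / c)));
    [intros; unfold Phi; fold c; unfold Rdiv; ring |].
  apply (is_lim_plus' (fun _ => / 2)); [apply is_lim_const |].
  apply is_lim_scal, is_lim_affine; [apply c_pos | now left | apply is_lim_gauss_int_p].
Qed.

Lemma is_lim_Phi_m : is_lim Phi m_infty 0.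
Proof.
  replace 0 with (/ 2 + / sqrt PI * - (sqrt PI / 2)) by (assert (Hp := sqrt_PI_pos); field; lra).
  apply (is_lim_ext (fun y => / 2 + / sqrt PI * gauss_int ((y - mu) / c)));
    [intros; unfold Phi; fold c; unfold Rdiv; ring |].
  apply (is_lim_plus' (fun _ => / 2)); [apply is_lim_const |].
  apply is_lim_scal, is_lim_affine; [apply c_pos | now right | apply is_lim_gauss_int_m].
Qed.

Lemma is_lim_Psi_p : is_lim Psi p_infty (/ (2 * s * PI) * (sqrt PI / 2)).
Proof.
  apply (is_lim_ext (fun y => / (2 * s * PI) * gauss_int ((y - mu) / s)));
    [intros; unfold Psi, Rdiv; ring |].
  apply is_lim_scal, is_lim_affine; [exact s_pos | now left | apply is_lim_gauss_int_p].
Qed.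

Lemma is_lim_Psi_m : is_lim Psi m_infty (/ (2 * s * PI) * - (sqrt PI / 2)).
Proof.
  apply (is_lim_ext (fun y => / (2 * s * PI) * gauss_int ((y - mu) / s)));
    [intros; unfold Psi, Rdiv; ring |].
  apply is_lim_scal, is_lim_affine; [exact s_pos | now right | apply is_lim_gauss_int_m].
Qed.

End Normal.

Section ExpectedMin.
Variables (mu s K : R).
Hypothesis s_pos : 0 < s.

Local Notation pdf := (pdf mu s).
Local Notation Phi := (Phi mu s).
Local Notation Psi := (Psi mu s).

Lemma ex_derive_pdf y : ex_derive pdf y.
Proof. eexists; apply is_derive_pdf, s_pos. Qed.
Lemma ex_derive_Phi y : ex_derive Phi y.
Proof. eexists; apply is_derive_Phi, s_pos. Qed.
Lemma ex_derive_Psi y : ex_derive Psi y.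
Proof. eexists; apply is_derive_Psi, s_pos. Qed.

Ltac ex_derive_normal :=
  repeat split; first [apply ex_derive_pdf | apply ex_derive_Phi | apply ex_derive_Psi | exact I].
Ltac derive_normal :=
  auto_derive;
  [ ex_derive_normal
  | rewrite ?(is_derive_unique _ _ _ (is_derive_pdf mu s s_pos _)),
            ?(is_derive_unique _ _ _ (is_derive_Phi mu s s_pos _)),
            ?(is_derive_unique _ _ _ (is_derive_Psi mu s s_pos _)) ].

Ltac lim_normal :=
  repeat first
    [ apply is_lim_Phi_p | apply is_lim_Psi_p | apply is_lim_Phi_m | apply is_lim_Psi_m
    | apply is_lim_pdf | apply is_lim_const
    | apply is_lim_minus' | apply is_lim_plus' | apply is_lim_scal | apply is_lim_mult_fin ];
  auto.

Definition inner_value (x : R) : R := pdf x * ((K + x) + (mu - x) * Phi x - s ^ 2 * pdf x).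

(* int (K + min x y) pdf x pdf y dy: for [y <= x] the integrand is [(K + y) pdf x pdf y],
   for [y >= x] it is [(K + x) pdf x pdf y]. *)
Lemma inner_integral x : ImpInt (fun y => (K + Rmin x y) * pdf x * pdf y) (inner_value x).
Proof.
  replace (inner_value x)
    with ((pdf x * (K + x) * 1 - pdf x * (K + x) * Phi x)
          + (pdf x * ((K + mu) * Phi x - s ^ 2 * pdf x) - pdf x * ((K + mu) * 0 - s ^ 2 * 0)))
    by (unfold inner_value; ring).
  apply (ImpInt_piecewise_antiderivative _
           (fun y => pdf x * ((K + mu) * Phi y - s ^ 2 * pdf y))
           (fun y => pdf x * (K + x) * Phi y)).
  - intros y.
    apply (continuous_mult (K := R_AbsRing)); [| apply continuous_pdf, s_pos].
    apply (continuous_mult (K := R_AbsRing)); [| apply continuous_const].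
    apply (continuous_plus (V := R_NormedModule));
      [apply continuous_const | apply continuous_Rmin_r].
  - intros y Hy; rewrite Rmin_right by lra.
    derive_normal; field; lra.
  - intros y Hy; rewrite Rmin_left by lra.
    derive_normal; ring.
  - lim_normal.
  - lim_normal.
Qed.

Definition outer_antiderivative (x : R) : R :=
  (K + mu) * Phi x - s ^ 2 * pdf x + s ^ 2 * (pdf x * Phi x) - 2 * s ^ 2 * Psi x.

Lemma outer_integral : ImpInt inner_value (K + mu - s / sqrt PI).
Proof.
  assert (Hp := sqrt_PI_pos); assert (HPI := PI_RGT_0).
  set (Lm := (K + mu) * 0 - s ^ 2 * 0 + s ^ 2 * (0 * 0)
             - 2 * s ^ 2 * (/ (2 * s * PI) * - (sqrt PI / 2))).
  set (Lp := (K + mu) * 1 - s ^ 2 * 0 + s ^ 2 * (0 * 1)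
             - 2 * s ^ 2 * (/ (2 * s * PI) * (sqrt PI / 2))).
  replace (K + mu - s / sqrt PI) with (Lp - Lm).
  - apply (ImpInt_antiderivative inner_value outer_antiderivative).
    + intros x; apply (ex_derive_continuous (V := R_NormedModule)).
      unfold inner_value; auto_derive; ex_derive_normal.
    + intros x; unfold outer_antiderivative, inner_value; derive_normal; field; lra.
    + unfold outer_antiderivative; lim_normal.
    + unfold outer_antiderivative; lim_normal.
  - assert (Esq : sqrt PI * sqrt PI = PI) by (apply sqrt_sqrt; lra).
    unfold Lp, Lm; set (q := sqrt PI) in *; rewrite <- Esq; field; lra.
Qed.

End ExpectedMin.

(* Cauchy product of the geometric series with itself: sum (n+1) q^n = 1/(1-q)^2. *)
Lemma is_series_linear_geom q :
  0 <= q < 1 -> is_series (fun n => INR (S n) * q ^ n) (/ (1 - q) * / (1 - q)).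
Proof.
  intros Hq.
  assert (Hgeom : is_series (fun n => q ^ n) (/ (1 - q)))
    by (apply is_series_geom; rewrite Rabs_right; lra).
  assert (Habs : ex_series (fun n => Rabs (q ^ n))).
  { exists (/ (1 - q)); apply (is_series_ext (fun n => q ^ n)); [| exact Hgeom].
    intros n; rewrite Rabs_right; [reflexivity | apply Rle_ge, pow_le; lra]. }
  apply (is_series_ext (fun n => sum_f_R0 (fun k => q ^ k * q ^ (n - k)) n)).
  - intros n; rewrite (sum_eq _ (fun _ => q ^ n)).
    + rewrite sum_cte; apply Rmult_comm.
    + intros k Hk; rewrite <- pow_add; f_equal; lia.
  - apply is_series_mult; assumption.
Qed.

Lemma geom_mean_shift b c :
  0 < b < 1 -> infinite_sum (fun k => geom_pmf b k * (INR (S k) + c)) (/ b + c).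
Proof.
  intros Hb; apply is_series_Reals.
  assert (Hlin := is_series_linear_geom (1 - b) ltac:(lra)).
  assert (Hgeom : is_series (fun n => (1 - b) ^ n) (/ (1 - (1 - b))))
    by (apply is_series_geom; rewrite Rabs_right; lra).
  replace (1 - (1 - b)) with b in Hlin, Hgeom by ring.
  apply (is_series_ext
           (fun n => plus (scal b (INR (S n) * (1 - b) ^ n)) (scal (b * c) ((1 - b) ^ n)))).
  - intros n; unfold geom_pmf, plus, scal; simpl; unfold mult; simpl; ring.
  - replace (/ b + c) with (plus (scal b (/ b * / b)) (scal (b * c) (/ b)))
      by (unfold plus, scal; simpl; unfold mult; simpl; field; lra).
    apply (is_series_plus (V := R_NormedModule));
      apply (is_series_scal (K := R_AbsRing) (V := R_NormedModule)); assumption.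
Qed.

Lemma INR_ge_2 M : (2 <= M)%nat -> 2 <= INR M.
Proof. intros HM; apply (le_INR 2) in HM; simpl in HM; lra. Qed.

Lemma Cpar_bounds M b : (2 <= M)%nat -> 0 < b < 1 -> 0 < Cpar M b < 1.
Proof.
  intros HM Hb; unfold Cpar; assert (H2 := INR_ge_2 M HM).
  split; [apply Rdiv_lt_0_compat; lra |].
  apply (Rmult_lt_reg_r (2 * INR M - 1)); [lra |].
  unfold Rdiv; rewrite Rmult_assoc, Rinv_l by lra; lra.
Qed.

Lemma sigma0_pos M b : (2 <= M)%nat -> 0 < b < 1 -> 0 < sigma0 M b.
Proof.
  intros HM Hb; assert (HC := Cpar_bounds M b HM Hb); assert (H2 := INR_ge_2 M HM).
  assert (Hinv : 1 < / Cpar M b) by (rewrite <- Rinv_1; apply Rinv_lt_contravar; lra).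
  unfold sigma0, mu0; apply sqrt_lt_R0, Rmult_lt_0_compat; [apply Rdiv_lt_0_compat |]; lra.
Qed.

Lemma expectation_Z0 M b : (2 <= M)%nat -> 0 < b < 1 ->
  ExpZ0 M b (/ b + mu0 M b - sigma0 M b / sqrt PI).
Proof.
  intros HM Hb; assert (Hs := sigma0_pos M b HM Hb).
  set (mu := mu0 M b) in *; set (s := sigma0 M b) in *.
  exists (fun k => INR (S k) + (mu - s / sqrt PI)); split.
  - intros k; exists (inner_value mu s (INR (S k))); split.
    + apply inner_integral, Hs.
    + replace (INR (S k) + (mu - s / sqrt PI)) with (INR (S k) + mu - s / sqrt PI) by ring.
      apply outer_integral, Hs.
  - replace (/ b + mu - s / sqrt PI) with (/ b + (mu - s / sqrt PI)) by ring.
    apply geom_mean_shift, Hb.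
Qed.

Definition Am (m : R) : R := (m - 1) * (2 * m - 1).
Definition objective (m b : R) : R :=
  / b + Am m / (1 - b) - sqrt (Am m * (2 * m - 2 + b)) / (1 - b) / sqrt PI.

Lemma objective_eq M b : (2 <= M)%nat -> 0 < b < 1 ->
  / b + mu0 M b - sigma0 M b / sqrt PI = objective (INR M) b.
Proof.
  intros HM Hb; assert (H2 := INR_ge_2 M HM).
  unfold objective, sigma0, mu0, Cpar, Am; set (m := INR M) in *.
  replace ((m - 1) / ((1 - b) / (2 * m - 1))) with ((m - 1) * (2 * m - 1) / (1 - b))
    by (field; lra).
  replace ((m - 1) * (2 * m - 1) / (1 - b) * (/ ((1 - b) / (2 * m - 1)) - 1))
    with ((m - 1) * (2 * m - 1) * (2 * m - 2 + b) / ((1 - b) * (1 - b))) by (field; lra).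
  rewrite sqrt_div_alt, sqrt_square by nra; reflexivity.
Qed.

Lemma sqrt_PI_gt_1 : 1 < sqrt PI.
Proof.
  rewrite <- sqrt_1; apply sqrt_lt_1_alt.
  split; [lra | generalize PI2_1; lra].
Qed.

Section Comparison.
Variable m : R.
Hypothesis m_ge_2 : 2 <= m.

Let S1 := sqrt (Am m * (2 * m - 1)) / sqrt PI.
Let S0 := sqrt (Am m * (2 * m - 2)) / sqrt PI.

Lemma Am_ge : 2 * m - 1 <= Am m.
Proof. unfold Am; nra. Qed.

Lemma S1_lt_Am : S1 < Am m.
Proof.
  assert (HA := Am_ge); assert (HP := sqrt_PI_gt_1).
  assert (Hs : sqrt (Am m * (2 * m - 1)) <= Am m).
  { apply (Rle_trans _ (sqrt (Am m * Am m))); [apply sqrt_le_1_alt; nra |].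
    rewrite sqrt_square; lra. }
  unfold S1; apply (Rmult_lt_reg_r (sqrt PI)); [lra |].
  unfold Rdiv; rewrite Rmult_assoc, Rinv_l by lra; nra.
Qed.

(* For [beta < 1] the square-root term is at most [S1], and [1/(1-b) >= 1 + b]. *)
Lemma objective_lower b : 0 < b < 1 -> / b + (Am m - S1) + (Am m - S1) * b <= objective m b.
Proof.
  intros Hb; assert (HA := Am_ge); assert (HS := S1_lt_Am); assert (HP := sqrt_PI_gt_1).
  assert (Hsq : sqrt (Am m * (2 * m - 2 + b)) / (1 - b) / sqrt PI <= S1 / (1 - b)).
  { unfold S1, Rdiv; rewrite Rmult_assoc, (Rmult_comm (/ (1 - b))), <- Rmult_assoc.
    apply Rmult_le_compat_r; [left; apply Rinv_0_lt_compat; lra |].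
    apply Rmult_le_compat_r; [left; apply Rinv_0_lt_compat; lra |].
    apply sqrt_le_1_alt; nra. }
  assert (Hinv : (Am m - S1) * (1 + b) <= (Am m - S1) / (1 - b)).
  { unfold Rdiv; apply Rmult_le_compat_l; [lra |].
    apply (Rmult_le_reg_r (1 - b)); [lra |]; rewrite Rinv_l by lra; nra. }
  unfold objective.
  replace (Am m / (1 - b)) with ((Am m - S1) / (1 - b) + S1 / (1 - b)) by (field; lra).
  lra.
Qed.

(* For [beta > 0] the square-root term is at least [S0], and [1/(1-b) >= 1]. *)
Lemma objective_upper b : 0 < b < 1 -> objective m b <= / b + Am m + Am m * b / (1 - b) - S0.
Proof.
  intros Hb; assert (HA := Am_ge); assert (HP := sqrt_PI_gt_1).
  assert (HS0 : 0 <= S0)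
    by (unfold S0; apply Rle_mult_inv_pos; [apply sqrt_pos | lra]).
  assert (Hsq : S0 / (1 - b) <= sqrt (Am m * (2 * m - 2 + b)) / (1 - b) / sqrt PI).
  { unfold S0, Rdiv; rewrite Rmult_assoc, (Rmult_comm (/ sqrt PI)), <- Rmult_assoc.
    apply Rmult_le_compat_r; [left; apply Rinv_0_lt_compat; lra |].
    apply Rmult_le_compat_r; [left; apply Rinv_0_lt_compat; lra |].
    apply sqrt_le_1_alt; nra. }
  assert (Hge : S0 <= S0 / (1 - b)).
  { unfold Rdiv; rewrite <- (Rmult_1_r S0) at 1; apply Rmult_le_compat_l; [lra |].
    rewrite <- Rinv_1; apply Rinv_le_contravar; lra. }
  unfold objective.
  replace (Am m / (1 - b)) with (Am m + Am m * b / (1 - b)) by (field; lra).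
  lra.
Qed.

Lemma minimizer_inequality b b0 : 0 < b < 1 -> 0 < b0 < 1 ->
  objective m b <= objective m b0 ->
  / b + (Am m - S1) * b <= / b0 + Am m * b0 / (1 - b0) + (S1 - S0).
Proof.
  intros Hb Hb0 Hle.
  assert (H1 := objective_lower b Hb); assert (H2 := objective_upper b0 Hb0); lra.
Qed.

End Comparison.

(* The optimal value [sqrt 2 / 2] of [M * beta], used as the comparison point. *)
Definition opt_const : R := sqrt 2 / 2.

Lemma opt_const_bounds : 0 < opt_const < 1.
Proof.
  unfold opt_const; assert (0 < sqrt 2) by (apply sqrt_lt_R0; lra).
  assert (sqrt 2 < 2).
  { apply (Rlt_le_trans _ (sqrt (2 * 2))); [apply sqrt_lt_1_alt; lra |].
    rewrite sqrt_square; lra. }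
  lra.
Qed.

(* The coefficients of the rescaled inequality, as functions of [h = 1/m]. *)
Definition coef_a (h : R) : R :=
  (1 - h) * (2 - h) - sqrt ((1 - h) * ((2 - h) * (2 - h)) * h) / sqrt PI.
Definition coef_R (h : R) : R :=
  / opt_const + (1 - h) * (2 - h) * opt_const / (1 - opt_const * h)
  + sqrt ((1 - h) * h) / sqrt PI.

Lemma coef_a_eq m : 2 <= m ->
  coef_a (/ m) = (Am m - sqrt (Am m * (2 * m - 1)) / sqrt PI) / (m * m).
Proof.
  intros Hm; assert (Hp := sqrt_PI_pos); unfold coef_a.
  replace ((1 - / m) * ((2 - / m) * (2 - / m)) * / m)
    with (Am m * (2 * m - 1) / (m * m * (m * m))) by (unfold Am; field; lra).
  rewrite <- sqrt_div_sq by nra; unfold Am; field; lra.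
Qed.

(* The gap between the two square roots of [minimizer_inequality], divided by [m],
   is at most [sqrt ((1 - 1/m) / m)], by concavity of the square root. *)
Lemma sqrt_gap_bound m : 2 <= m ->
  (sqrt (Am m * (2 * m - 1)) - sqrt (Am m * (2 * m - 2))) / m <= sqrt ((1 - / m) * / m).
Proof.
  intros Hm; assert (HA := Am_ge m Hm).
  set (A := Am m) in *; set (X1 := A * (2 * m - 1)); set (X0 := A * (2 * m - 2)).
  assert (HX1 : 0 < X1) by (unfold X1; nra).
  assert (Hs1 : 0 < sqrt X1) by (apply sqrt_lt_R0; lra).
  replace (sqrt ((1 - / m) * / m)) with ((X1 - X0) / sqrt X1 / m).
  - unfold Rdiv at 1 3; apply Rmult_le_compat_r; [left; apply Rinv_0_lt_compat; lra |].
    apply sqrt_sub_le; [unfold X0, X1; split; nra | lra].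
  - replace (X1 - X0) with A by (unfold X1, X0; ring).
    rewrite <- (sqrt_square (A / sqrt X1 / m))
      by (apply Rlt_le, Rdiv_lt_0_compat; [apply Rdiv_lt_0_compat |]; lra).
    f_equal.
    replace (A / sqrt X1 / m * (A / sqrt X1 / m))
      with (A * A / (m * m * (sqrt X1 * sqrt X1))) by (field; lra).
    rewrite sqrt_sqrt by lra; unfold X1, A, Am; field; lra.
Qed.

(* Comparing a minimizer [b] with [opt_const / m] and dividing by [m]:
   [t = m b] satisfies [1/t + coef_a (1/m) t <= coef_R (1/m)]. *)
Lemma rescaled_minimizer_inequality m b : 2 <= m -> 0 < b < 1 ->
  objective m b <= objective m (opt_const / m) ->
  0 < coef_a (/ m) /\ / (m * b) + coef_a (/ m) * (m * b) <= coef_R (/ m).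
Proof.
  intros Hm Hb Hle.
  assert (Hc := opt_const_bounds); assert (HP := sqrt_PI_gt_1).
  assert (Hb0 : 0 < opt_const / m < 1).
  { split; [apply Rdiv_lt_0_compat; lra |].
    apply (Rmult_lt_reg_r m); [lra |]; unfold Rdiv; rewrite Rmult_assoc, Rinv_l; lra. }
  assert (Hineq := minimizer_inequality m Hm b _ Hb Hb0 Hle).
  assert (HS := S1_lt_Am m Hm); assert (Hgap := sqrt_gap_bound m Hm).
  rewrite coef_a_eq by lra.
  set (A := Am m) in *.
  set (r1 := sqrt (A * (2 * m - 1))) in *; set (r0 := sqrt (A * (2 * m - 2))) in *.
  split; [apply Rdiv_lt_0_compat; nra |].
  apply (Rmult_le_compat_r (/ m)) in Hineq; [| left; apply Rinv_0_lt_compat; lra].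
  replace ((/ b + (A - r1 / sqrt PI) * b) * / m)
    with (/ (m * b) + (A - r1 / sqrt PI) / (m * m) * (m * b)) in Hineq by (field; lra).
  replace ((/ (opt_const / m) + A * (opt_const / m) / (1 - opt_const / m)
            + (r1 / sqrt PI - r0 / sqrt PI)) * / m)
    with (/ opt_const + (1 - / m) * (2 - / m) * opt_const / (1 - opt_const * / m)
          + (r1 - r0) / m / sqrt PI) in Hineq by (unfold A, Am; field; lra).
  apply (Rle_trans _ _ _ Hineq); unfold coef_R; apply Rplus_le_compat_l.
  unfold Rdiv at 1 2; apply Rmult_le_compat_r; [left; apply Rinv_0_lt_compat; lra | exact Hgap].
Qed.

Ltac lim_seq_tac Hh :=
  repeat first
    [ exact Hh | apply is_lim_seq_const
    | apply is_lim_seq_minus' | apply is_lim_seq_plus'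
    | apply is_lim_seq_div'; [| | try (assert (Hc := opt_const_bounds);
                                      assert (HP := sqrt_PI_gt_1); lra)]
    | apply is_lim_seq_mult'
    | apply is_lim_seq_sqrt; [| try lra] ].

Lemma coef_a_lim (h : nat -> R) : is_lim_seq h 0 -> is_lim_seq (fun n => coef_a (h n)) 2.
Proof.
  intros Hh.
  replace 2 with (coef_a 0)
    by (unfold coef_a; rewrite Rmult_0_r, sqrt_0; unfold Rdiv; ring).
  unfold coef_a; lim_seq_tac Hh.
Qed.

Lemma coef_R_lim (h : nat -> R) :
  is_lim_seq h 0 -> is_lim_seq (fun n => coef_R (h n)) (2 * sqrt 2).
Proof.
  intros Hh.
  replace (2 * sqrt 2) with (coef_R 0).
  - unfold coef_R; lim_seq_tac Hh.
  - assert (Hc := opt_const_bounds); assert (E2 := sqrt_sqrt 2 ltac:(lra)).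
    unfold coef_R, opt_const in *.
    replace ((1 - 0) * 0) with 0 by ring; rewrite sqrt_0.
    assert (Hs : 0 < sqrt 2) by lra; set (r := sqrt 2) in *.
    assert (Hp := sqrt_PI_pos).
    field_simplify_eq; [replace (r ^ 2) with 2 by (rewrite <- E2; ring); ring | lra].
Qed.

Lemma minimizer_asymptotics (betastar : nat -> R) :
  (forall M : nat, (2 <= M)%nat ->
     0 < betastar M < 1 /\
     (forall beta L1 L2, 0 < beta < 1 ->
        ExpZ0 M (betastar M) L1 -> ExpZ0 M beta L2 -> L1 <= L2)) ->
  Un_cv (fun M => INR M * betastar M) (sqrt 2 / 2).
Proof.
  intros Hmin; apply is_lim_seq_Reals.
  assert (E2 := sqrt_sqrt 2 ltac:(lra)).
  replace (sqrt 2 / 2) with (2 * sqrt 2 / (2 * 2)) by field.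
  apply (squeeze_double_root _ (fun n => coef_a (/ INR n)) (fun n => coef_R (/ INR n)));
    [| apply coef_a_lim, is_lim_seq_inv_INR | apply coef_R_lim, is_lim_seq_inv_INR
     | lra | nra].
  exists 2%nat; intros M HM.
  destruct (Hmin M HM) as [Hb Hle].
  assert (Hm := INR_ge_2 M HM); assert (Hc := opt_const_bounds).
  assert (Hb0 : 0 < opt_const / INR M < 1).
  { split; [apply Rdiv_lt_0_compat; lra |].
    apply (Rmult_lt_reg_r (INR M)); [lra |]; unfold Rdiv; rewrite Rmult_assoc, Rinv_l; lra. }
  (* the minimizer beats the comparison point [opt_const / M] *)
  assert (Hcmp := Hle _ _ _ Hb0 (expectation_Z0 M _ HM Hb) (expectation_Z0 M _ HM Hb0)).
  rewrite !objective_eq in Hcmp by assumption.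
  destruct (rescaled_minimizer_inequality (INR M) (betastar M) Hm Hb Hcmp) as [Ha Hineq].
  repeat split; [apply Rmult_lt_0_compat; lra | exact Ha | exact Hineq].
Qed.

Theorem mainTheorem5 :
  (forall (M : nat) (beta : R), (2 <= M)%nat -> 0 < beta < 1 ->
     ExpZ0 M beta (/ beta + mu0 M beta - sigma0 M beta / sqrt PI))
  /\
  (forall betastar : nat -> R,
     (forall M : nat, (2 <= M)%nat ->
        0 < betastar M < 1 /\
        (forall beta L1 L2, 0 < beta < 1 ->
           ExpZ0 M (betastar M) L1 -> ExpZ0 M beta L2 -> L1 <= L2)) ->
     Un_cv (fun M => INR M * betastar M) (sqrt 2 / 2)).
Proof.
  split.
  - exact expectation_Z0.
  - exact minimizer_asymptotics.
Qed.
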